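(* Let $\alpha\in\mathbb C$. For every integer $n\ge1$, the first column $k_n:=K_ne_1$ of $K_n:=A_\alpha^n-T\big((z+z^{-1})^n\big)$ satisfies $$k_n=\sum_{i=0}^{\lfloor (n-1)/2\rfloor}\binom{n}{i}h_{n-2i}.$$
   Context: All matrices are semi-infinite with rows and columns indexed by the positive integers; $e_1$ is the first column of the semi-infinite identity. $T(a)$ denotes the Toeplitz matrix with $(i,j)$ entry $a_{j-i}$ for $a(z)=\sum_{i\in\mathbb Z}a_iz^i$, and $A_\alpha:=T(z+z^{-1})+\alpha e_1e_1^T$ (tridiagonal, ones on sub- and superdiagonal, $(1,1)$ entry $\alpha$, zeros elsewhere). Let $\theta=\alpha^2-1$ and define the polynomials $h_1(z)=\alpha z$ and, for $n\ge 2$, $h_n(z)=\theta\sum_{i=1}^{n-1}\alpha^{n-i-1}z^i+\alpha z^n$. The same symbol $h_n$ denotes the semi-infinite column vector whose $i$-th entry is the coefficient of $z^i$ in $h_n(z)$ ($i\ge1$), padded with zeros. *)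

From mathcomp Require Import all_boot all_order all_algebra.
Set Implicit Arguments. Unset Strict Implicit. Unset Printing Implicit Defensive.
Import Order.TTheory GRing.Theory Num.Theory.
Local Open Scope ring_scope.

(* Semi-infinite matrices over C, rows/columns indexed by positive integers.
   We use functions nat -> nat -> C and only ever read entries with i, j >= 1;
   all constructions below put 0 at index 0. *)
Definition simx (C : Type) := nat -> nat -> C.

Section SemiInf.
Variable C : numClosedFieldType.

(* Coefficient a_k (k : int) of the Laurent polynomial (z + z^{-1})^n
   = z^{-n} (1 + z^2)^n. *)
Definition zpz_coef (n : nat) (k : int) : C :=
  match (k + n%:Z)%R with
  | Posz m => ((1 + 'X^2 : {poly C}) ^+ n)`_m
  | Negz _ => 0
  end.

Definition toeplitz (a : int -> C) : simx C :=
  fun i j => if (0 < i)%N && (0 < j)%N then a (j%:Z - i%:Z) else 0.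

Definition e11 : simx C := fun i j => if (i == 1%N) && (j == 1%N) then 1 else 0.

Definition Aalpha (alpha : C) : simx C :=
  fun i j => toeplitz (zpz_coef 1) i j + alpha * e11 i j.

Definition simx1 : simx C := fun i j => if (0 < i)%N && (i == j) then 1 else 0.

(* Matrix product A * B for a left factor A whose row i is supported in
   columns k <= i+1 (true for the tridiagonal A_alpha); then the series
   sum_{k>=1} A_ik B_kj reduces to this finite sum. *)
Definition mul_lower_hess (A B : simx C) : simx C :=
  fun i j => \sum_(1 <= k < i.+2) A i k * B k j.

Definition Apow (alpha : C) (n : nat) : simx C :=
  iter n (mul_lower_hess (Aalpha alpha)) simx1.

Definition Kmat (alpha : C) (n : nat) : simx C :=
  fun i j => Apow alpha n i j - toeplitz (zpz_coef n) i j.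

Definition kcol (alpha : C) (n : nat) : nat -> C := fun i => Kmat alpha n i 1%N.

Definition hpoly (alpha : C) (n : nat) : {poly C} :=
  if n == 1%N then alpha *: 'X
  else (alpha ^+ 2 - 1) *: (\sum_(1 <= i < n) alpha ^+ (n - i - 1) *: 'X^i)
       + alpha *: 'X^n.

End SemiInf.

From mathcomp Require Import all_boot all_order all_algebra.
From mathcomp Require Import zify ring.
Set Implicit Arguments. Unset Strict Implicit. Unset Printing Implicit Defensive.
Import Order.TTheory GRing.Theory Num.Theory.
Local Open Scope ring_scope.

(* The first column of [A_alpha^n] is computed by writing it as a binomial
   combination [sum_l C(n,l) u_(n-2l)] of the vectors [u_m := h_m + e_(m+1)]
   (with [h_m = 0] for [m <= 0], and [e_j = 0] for [j <= 0]).  This works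
   because [A_alpha u_m = u_(m+1) + u_(m-1)] up to the boundary term
   [(delta_(m,1) - delta_(m,-1)) e_1], and these boundary terms cancel in the
   binomial sum by the symmetry [C(n,l) = C(n,n-l)].  The same binomial sum of
   the [e_(m+1)] alone is the first column of [T((z+z^-1)^n)], so subtracting
   it leaves the terms with [n - 2l > 0], i.e. [l <= (n-1)/2]. *)

Ltac case_ifs := repeat (case: ifP => ?); try (exfalso; lia).

Section BinomialSum.
Variable R : pzRingType.

(* The pairing of [phi] with the coefficient sequence of [(z + z^-1)^n]. *)
Definition binsum (n : nat) (phi : int -> R) : R :=
  \sum_(0 <= l < n.+1) 'C(n, l)%:R * phi (n%:Z - (2 * l)%N%:Z).

Lemma eq_binsum n (phi psi : int -> R) :
  phi =1 psi -> binsum n phi = binsum n psi.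
Proof. by move=> eq_phi; apply: eq_bigr => l _; rewrite eq_phi. Qed.

Lemma binsumD n (phi psi : int -> R) :
  binsum n (fun m => phi m + psi m) = binsum n phi + binsum n psi.
Proof. by rewrite /binsum -big_split; apply: eq_bigr => l _; rewrite mulrDr. Qed.

Lemma binsumB n (phi psi : int -> R) :
  binsum n (fun m => phi m - psi m) = binsum n phi - binsum n psi.
Proof. by rewrite /binsum -sumrB; apply: eq_bigr => l _; rewrite mulrBr. Qed.

Lemma binsumS n (phi : int -> R) :
  binsum n.+1 phi = binsum n (fun m => phi (m + 1)) + binsum n (fun m => phi (m - 1)).
Proof.
rewrite /binsum big_nat_recl // bin0.
under eq_bigr do rewrite binS natrD mulrDl.
rewrite big_split /= addrA; congr (_ + _).
  rewrite [in RHS]big_nat_recl // bin0 big_nat_recr //= bin_small // mul0r addr0.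
  congr (_ * phi _ + _); first lia.
  rewrite addr0; apply: eq_bigr => l _; congr (_ * phi _); lia.
by apply: eq_bigr => l _; congr (_ * phi _); lia.
Qed.

Lemma binsum_opp n (phi : int -> R) : binsum n phi = binsum n (fun m => phi (- m)).
Proof.
rewrite /binsum big_nat_rev /=; apply: eq_big_nat => l /andP [_ lt_l].
rewrite add0n subSS bin_sub; last lia.
by congr (_ * phi _); lia.
Qed.

Definition delta (j m : int) : R := if m == j then 1 else 0.

Lemma binsum_delta_opp n j : binsum n (delta j) = binsum n (delta (- j)).
Proof. by rewrite [RHS]binsum_opp; apply: eq_binsum => m; rewrite /delta eqr_opp. Qed.

End BinomialSum.

Arguments delta {R}.

Lemma sum_nat_if_eq (R : nmodType) (a b c : nat) (F : nat -> R) :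
  \sum_(a <= k < b) (if k == c then F k else 0) = if (a <= c < b)%N then F c else 0.
Proof. by rewrite -big_mkcond big_nat1_eq. Qed.

Section FirstColumn.
Variables (C : numClosedFieldType) (alpha : C).

Lemma zpz_coef_binsum n j : zpz_coef C n j = binsum n (delta (- j)).
Proof.
rewrite /zpz_coef /binsum big_mkord.
case E: (j + n%:Z) => [k|k].
- rewrite addrC exprD1n coef_sum; apply: eq_bigr => l _.
  rewrite coefMn -exprM coefXn /delta.
  have -> : (n%:Z - (2 * l)%N%:Z == - j) = (k == 2 * l)%N by apply/eqP/eqP; lia.
  by case: (k == 2 * l)%N; rewrite ?mulr1 ?mulr0 ?mul0rn.
- rewrite big1 // => l _; rewrite /delta ifF ?mulr0 //; apply/eqP.
  have := ltn_ord l; lia.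
Qed.

Lemma toeplitz_zpz_col1 n i : (0 < i)%N ->
  toeplitz (zpz_coef C n) i 1 = binsum n (delta (i%:Z - 1)).
Proof. by move=> i_gt0; rewrite /toeplitz i_gt0 zpz_coef_binsum opprB. Qed.

(* Entry [i >= 1] of [A_alpha v]; only the entries [v k], [k >= 1], are read. *)
Definition Amulv (v : nat -> C) (i : nat) : C :=
  (if i == 1%N then alpha * v 1%N else v i.-1) + v i.+1.

Lemma Aalpha_entry i k : (0 < i)%N -> (0 < k)%N ->
  Aalpha alpha i k = (if k.+1 == i then 1 else 0) + (if k == i.+1 then 1 else 0)
    + (if (i == 1%N) && (k == 1%N) then alpha else 0).
Proof.
move=> i_gt0 k_gt0; rewrite /Aalpha /toeplitz /e11 i_gt0 k_gt0 /= zpz_coef_binsum.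
rewrite /binsum big_nat_recl // big_nat1 /delta bin0 bin1 /=.
case_ifs; ring.
Qed.

Lemma mul_Aalpha_row i (v : nat -> C) : (0 < i)%N ->
  \sum_(1 <= k < i.+2) Aalpha alpha i k * v k = Amulv v i.
Proof.
move=> i_gt0.
rewrite (@eq_big_nat _ _ _ _ _ _ (fun k => (if k == i.-1 then v k else 0) +
   (if k == i.+1 then v k else 0) +
   (if k == 1%N then (if i == 1%N then alpha * v k else 0) else 0))); last first.
  by move=> k k_in; rewrite Aalpha_entry //; [case_ifs; ring | lia].
rewrite !big_split /= !sum_nat_if_eq /Amulv.
case_ifs; ring.
Qed.

Lemma eq_Amulv (v w : nat -> C) i : {in [pred k | (0 < k)%N], v =1 w} ->
  (0 < i)%N -> Amulv v i = Amulv w i.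
Proof. by move=> eq_vw i_gt0; rewrite /Amulv; case: ifP => ?; rewrite !eq_vw // inE; lia. Qed.

Lemma AmulvD (v w : nat -> C) i : Amulv (fun k => v k + w k) i = Amulv v i + Amulv w i.
Proof. by rewrite /Amulv; case: ifP => _; ring. Qed.

Lemma Amulv_binsum n (w : int -> nat -> C) i :
  Amulv (fun k => binsum n (fun m => w m k)) i = binsum n (fun m => Amulv (w m) i).
Proof.
rewrite /Amulv /binsum; case: (i == 1%N); rewrite ?mulr_sumr -big_split;
  by apply: eq_bigr => l _ /=; ring.
Qed.

Definition theta : C := alpha ^+ 2 - 1.

(* The coefficient of [z^i] in [h_m] for [i >= 1] (see [hpoly_coef]). *)
Definition hcoef (m i : nat) : C :=
  if (0 < i < m)%N then theta * alpha ^+ (m - i - 1)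
  else if (i == m) && (0 < m)%N then alpha else 0.

Lemma hcoef_lt m i d : (0 < i)%N -> m = (i + d.+1)%N -> hcoef m i = theta * alpha ^+ d.
Proof. by move=> i_gt0 ->; rewrite /hcoef ifT; [congr (_ * _ ^+ _) | ]; lia. Qed.

Lemma hcoef_eq m i : (0 < i)%N -> m = i -> hcoef m i = alpha.
Proof. by move=> i_gt0 ->; rewrite /hcoef ifF ?eqxx ?i_gt0 //; lia. Qed.

Lemma hcoef_gt m i : (m < i)%N -> hcoef m i = 0.
Proof. by move=> lt_mi; rewrite /hcoef ifF; [rewrite ifF // | ]; lia. Qed.

Lemma hcoef0 i : hcoef 0 i = 0.
Proof. by rewrite /hcoef andbF ltn0 andbF. Qed.

Lemma hpoly_coef m i : (0 < m)%N -> (0 < i)%N -> (hpoly alpha m)`_i = hcoef m i.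
Proof.
move=> m_gt0 i_gt0; rewrite /hpoly; case: ifP => [/eqP ->|m_neq1].
  rewrite coefZ coefX.
  have [->|i_neq1] := eqVneq i 1%N; first by rewrite (@hcoef_eq 1 1) // mulr1.
  by rewrite hcoef_gt ?mulr0 //; lia.
rewrite coefD !coefZ coef_sum coefXn.
rewrite (eq_bigr (fun j => if j == i then alpha ^+ (m - j - 1) else 0)); last first.
  by move=> j _; rewrite coefZ coefXn eq_sym; case: (j == i); rewrite ?mulr1 ?mulr0.
rewrite sum_nat_if_eq /hcoef /theta.
by have [->|?] := eqVneq i m; case_ifs; rewrite /=; ring.
Qed.

Lemma hcoef_shift_interior m i : (1 < i)%N ->
  hcoef m.+1 i.-1 + hcoef m.+1 i.+1 = hcoef m.+2 i + hcoef m i.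
Proof.
move=> i_gt1; case: (ltngtP i m) => [lt_im|lt_mi|<-].
- have [d mE] : exists d, m = (i + d.+1)%N by exists (m - i.+1)%N; lia.
  by rewrite (@hcoef_lt m.+1 i.-1 d.+2) 1?(@hcoef_lt m.+1 i.+1 d)
    1?(@hcoef_lt m.+2 i d.+2) 1?(@hcoef_lt m i d) //; lia.
- rewrite (@hcoef_gt m.+1 i.+1) 1?(@hcoef_gt m i) ?addr0 //.
  case: (ltngtP i m.+2) => [lt_im2|lt_m2i|->].
  + by rewrite (@hcoef_lt m.+1 i.-1 0) 1?(@hcoef_lt m.+2 i 0) //; lia.
  + by rewrite !hcoef_gt //; lia.
  + by rewrite !hcoef_eq.
- by rewrite (@hcoef_lt i.+1 i.-1 1) 1?(@hcoef_eq i.+1 i.+1) 1?(@hcoef_lt i.+2 i 1)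
    1?(@hcoef_eq i i) //; lia.
Qed.

Lemma hcoef_shift_boundary m :
  alpha * hcoef m.+1 1 + hcoef m.+1 2 = hcoef m.+2 1 + hcoef m 1 + (m == 0%N)%:R.
Proof.
case: m => [|[|m]].
- by rewrite (@hcoef_eq 1 1) // (@hcoef_gt 1 2) // (@hcoef_lt 2 1 0) // hcoef0 /theta /=; ring.
- by rewrite (@hcoef_lt 2 1 0) // (@hcoef_eq 2 2) // (@hcoef_lt 3 1 1) // (@hcoef_eq 1 1)
    // /theta /=; ring.
- rewrite (@hcoef_lt m.+3 1 m.+1) 1?(@hcoef_lt m.+3 2 m) 1?(@hcoef_lt m.+4 1 m.+2)
    1?(@hcoef_lt m.+2 1 m) //.
  by rewrite /theta !exprS /=; ring.
Qed.

Lemma Amulv_hcoef m i : (0 < i)%N ->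
  Amulv (hcoef m.+1) i = hcoef m.+2 i + hcoef m i + ((m == 0%N) && (i == 1%N))%:R.
Proof.
move=> i_gt0; rewrite /Amulv.
have [->|i_neq1] := eqVneq i 1%N; first by rewrite andbT hcoef_shift_boundary.
by rewrite andbF addr0 hcoef_shift_interior //; lia.
Qed.

Definition hvec (m : int) (i : nat) : C :=
  if m is Posz k then hcoef k i else 0.

Lemma hvec_le0 (m : int) i : m <= 0 -> hvec m i = 0.
Proof. by case: m => [k|k] //= le_k0; rewrite (_ : k = 0%N) ?hcoef0 //; lia. Qed.

Lemma Amulv_hvec (m : int) i : (0 < i)%N ->
  Amulv (hvec m) i = hvec (m + 1) i + hvec (m - 1) i
    + (if (m == 1) && (i == 1%N) then 1 else 0)
    - (if (m == 0) && (i == 1%N) then alpha else 0).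
Proof.
move=> i_gt0; case: m => [[|k]|k].
- rewrite /Amulv /= !hcoef0 mulr0 if_same !addr0.
  have [->|i_neq1] := eqVneq i 1%N; first by rewrite hcoef_eq ?subrr.
  by rewrite hcoef_gt ?subr0 //; lia.
- rewrite (_ : k.+1%:Z + 1 = k.+2) 1?(_ : k.+1%:Z - 1 = k); [|lia|lia].
  rewrite [LHS](_ : _ = Amulv (hcoef k.+1) i) // Amulv_hcoef //= subr0.
  by rewrite eqz_nat eqSS; case: (_ && _).
- by rewrite /Amulv /= mulr0 addr0 if_same hvec_le0 ?addr0 ?subr0 //; lia.
Qed.

Definition uvec (m : int) (i : nat) : C := hvec m i + delta (i%:Z - 1) m.

Lemma Amulv_uvec (m : int) i : (0 < i)%N ->
  Amulv (uvec m) i = uvec (m + 1) i + uvec (m - 1) i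
    + (if i == 1%N then delta 1 m - delta (-1) m else 0).
Proof. by move=> i_gt0; rewrite AmulvD Amulv_hvec // /uvec /Amulv /delta; case_ifs; ring. Qed.

Lemma Apow_col1 n i : (0 < i)%N -> Apow alpha n i 1 = binsum n (fun m => uvec m i).
Proof.
elim: n i => [|n IHn] i i_gt0.
  rewrite /Apow /= /simx1 /binsum big_nat1 bin0 mul1r /uvec /= hcoef0 add0r /delta.
  by case_ifs.
rewrite /Apow iterS -/(Apow alpha n) /mul_lower_hess mul_Aalpha_row //.
have IHn_col : {in [pred k | (0 < k)%N], Apow alpha n ^~ 1%N =1
                 (fun k => binsum n (fun m => uvec m k))}.
  by move=> k; rewrite inE; exact: IHn.
rewrite (eq_Amulv IHn_col i_gt0).
rewrite Amulv_binsum binsumS -binsumD (eq_binsum _ (fun m => Amulv_uvec m i_gt0)).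
rewrite [LHS]binsumD [X in _ + X](_ : _ = 0) ?addr0 //.
case: (i == 1%N); first by rewrite binsumB binsum_delta_opp subrr.
by rewrite /binsum big1 // => l _; rewrite mulr0.
Qed.

Lemma binsum_hvec n i : (0 < n)%N -> (0 < i)%N ->
  binsum n (fun m => hvec m i) =
  \sum_(0 <= l < ((n.-1)./2).+1) 'C(n, l)%:R * (hpoly alpha (n - 2 * l))`_i.
Proof.
move=> n_gt0 i_gt0.
have halfE := odd_double_half n.-1; rewrite -muln2 in halfE.
have odd_le1 : (odd n.-1 <= 1)%N by case: odd.
rewrite /binsum (@big_cat_nat _ _ _ ((n.-1)./2).+1) /=; [|lia|lia].
rewrite [X in _ + X]big_nat_cond [X in _ + X]big1 ?addr0; last first.
  by move=> l /andP [/andP [? ?] _]; rewrite hvec_le0 ?mulr0 //; lia.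
apply: eq_big_nat => l l_in.
have -> : n%:Z - (2 * l)%N%:Z = (n - 2 * l)%N by lia.
by rewrite /= hpoly_coef //; lia.
Qed.

End FirstColumn.

Theorem theorem3 (C : numClosedFieldType) (alpha : C) (n : nat) :
  (1 <= n)%N ->
  forall i : nat, (1 <= i)%N ->
    kcol alpha n i =
    \sum_(0 <= l < ((n.-1)./2).+1) 'C(n, l)%:R * (hpoly alpha (n - 2 * l))`_i.
Proof.
move=> n_gt0 i i_gt0.
rewrite -binsum_hvec // /kcol /Kmat Apow_col1 // toeplitz_zpz_col1 // -binsumB.
by apply: eq_binsum => m; rewrite /uvec addrK.
Qed.
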